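(* There do not exist real numbers $a,b,c$ with $a\neq 0$ such that the quadratic function $f(x)=ax^2+bx+c$ has two distinct fixed points $p_1,p_2\in\mathbb{R}$ with the property that for each $i\in\{1,2\}$ there is $\epsilon_i>0$ such that for every $x^{(0)}$ with $|x^{(0)}-p_i|\le\epsilon_i$, the fixed-point iteration $x^{(t)}=f(x^{(t-1)})$, $t\ge1$, converges to $p_i$.
   Context: A fixed point of $f$ is a point $p$ with $f(p)=p$. *)

From Stdlib Require Import Reals.
Open Scope R_scope.

Definition quad (a b c : R) (x : R) : R := a * x ^ 2 + b * x + c.

Fixpoint fp_iter (f : R -> R) (x0 : R) (t : nat) : R :=
  match t with
  | O => x0
  | S t' => f (fp_iter f x0 t')
  end.

Definition is_fixed_point (f : R -> R) (p : R) : Prop := f p = p.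

Definition locally_attracting (f : R -> R) (p : R) : Prop :=
  exists eps : R, 0 < eps /\
    forall x0 : R, Rabs (x0 - p) <= eps -> Un_cv (fp_iter f x0) p.

(* If p1 <> p2 are fixed points of f(x) = a x^2 + b x + c, subtracting
   f(p1) = p1 from f(p2) = p2 gives a (p1 + p2) + b = 1, i.e. the slopes
   f'(p1) and f'(p2) add up to 2; so one of them, say f'(p), is at least 1.
   Around such a p we have f(x) - p = (x - p) (f'(p) + a (x - p)), hence on
   the side of p where a (x - p) > 0 the quantity a (x - p) never decreases
   along the iteration: no start on that side converges to p. *)

From Stdlib Require Import Reals Lra Psatz.
Open Scope R_scope.

Lemma quad_sub_fixed_point (a b c p x : R) :
  is_fixed_point (quad a b c) p ->
  quad a b c x - p = (x - p) * (2 * a * p + b + a * (x - p)).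
Proof.
  unfold is_fixed_point, quad; intros Hp.
  rewrite <- Hp at 1; ring.
Qed.

Lemma fixed_points_slope_sum (a b c p1 p2 : R) :
  p1 <> p2 ->
  is_fixed_point (quad a b c) p1 -> is_fixed_point (quad a b c) p2 ->
  (2 * a * p1 + b) + (2 * a * p2 + b) = 2.
Proof.
  intros Hp12 F1 F2.
  assert (Hdiff : (p2 - p1) * (a * (p1 + p2) + b - 1) = 0).
  { pose proof (quad_sub_fixed_point a b c p1 p2 F1) as E.
    rewrite F2 in E; lra. }
  apply Rmult_integral in Hdiff as [Hdiff | Hdiff]; lra.
Qed.

Lemma fp_iter_quad_repelled (a b c p x0 : R) :
  is_fixed_point (quad a b c) p -> 1 <= 2 * a * p + b ->
  0 < a * (x0 - p) ->
  forall n, a * (x0 - p) <= a * (fp_iter (quad a b c) x0 n - p).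
Proof.
  intros Hp Hslope Hx0 n; induction n as [|n IH]; simpl; [lra|].
  rewrite (quad_sub_fixed_point a b c p _ Hp).
  set (y := a * (fp_iter (quad a b c) x0 n - p)) in *.
  replace (a * ((fp_iter (quad a b c) x0 n - p) * (2 * a * p + b + _)))
    with (y * (2 * a * p + b + y)) by (unfold y; ring).
  nra.
Qed.

Lemma not_Un_cv_bounded_away (u : nat -> R) (l eps : R) :
  0 < eps -> (forall n, eps <= Rabs (u n - l)) -> ~ Un_cv u l.
Proof.
  intros Heps Hfar Hcv.
  destruct (Hcv eps Heps) as [N HN].
  specialize (HN N (le_n N)); specialize (Hfar N).
  unfold R_dist in HN; lra.
Qed.

Lemma exists_same_sign_at_distance (a eps : R) :
  a <> 0 -> 0 < eps -> exists y, Rabs y = eps /\ 0 < a * y.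
Proof.
  intros Ha Heps.
  destruct (Rle_or_lt 0 a) as [Hpos | Hneg].
  - exists eps; split; [apply Rabs_right; lra | nra].
  - exists (- eps); split; [rewrite Rabs_Ropp; apply Rabs_right; lra | nra].
Qed.

Lemma quad_not_locally_attracting (a b c p : R) :
  a <> 0 -> is_fixed_point (quad a b c) p -> 1 <= 2 * a * p + b ->
  ~ locally_attracting (quad a b c) p.
Proof.
  intros Ha Hp Hslope [eps [Heps Hattr]].
  destruct (exists_same_sign_at_distance a eps Ha Heps) as [y [Hy Hay]].
  assert (Hstart : Rabs (p + y - p) <= eps)
    by (replace (p + y - p) with y by ring; lra).
  apply (not_Un_cv_bounded_away (fp_iter (quad a b c) (p + y)) p eps Heps);
    [| exact (Hattr _ Hstart)].
  intros n.
  pose proof (fp_iter_quad_repelled a b c p (p + y) Hp Hslope) as Hrep.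
  replace (p + y - p) with y in Hrep by ring.
  specialize (Hrep Hay n).
  set (z := fp_iter (quad a b c) (p + y) n - p) in *.
  assert (Hnorm : Rabs a * eps <= Rabs a * Rabs z).
  { rewrite <- Hy, <- !Rabs_mult, !Rabs_right by lra; exact Hrep. }
  apply Rmult_le_reg_l in Hnorm; [exact Hnorm | now apply Rabs_pos_lt].
Qed.

Theorem lemmaA8 :
  ~ (exists a b c p1 p2 : R,
        a <> 0 /\ p1 <> p2 /\
        is_fixed_point (quad a b c) p1 /\ is_fixed_point (quad a b c) p2 /\
        locally_attracting (quad a b c) p1 /\
        locally_attracting (quad a b c) p2).
Proof.
  intros (a & b & c & p1 & p2 & Ha & Hp12 & F1 & F2 & A1 & A2).
  pose proof (fixed_points_slope_sum a b c p1 p2 Hp12 F1 F2) as Hsum.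
  destruct (Rle_or_lt 1 (2 * a * p1 + b)) as [Hslope1 | Hslope1].
  - exact (quad_not_locally_attracting a b c p1 Ha F1 Hslope1 A1).
  - apply (quad_not_locally_attracting a b c p2 Ha F2); [lra | exact A2].
Qed.
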